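(* Let $Q=(q_n)_{n\ge1}$ be a basic sequence that is infinite in limit, and suppose there exist constants $M$ and $t$ such that $l_j\le M$ for all $j>t$. Then for every $Q$-special sequence $F$ and every real $\psi>1$, $$D_n^*(y_F)<\psi\cdot\sqrt{2M}\cdot(2M+1)\cdot n^{-1/2}$$ for all sufficiently large $n$.
   Context: A basic sequence is a sequence $Q=(q_n)_{n\ge1}$ of integers with $q_n\ge 2$; it is infinite in limit if $q_n\to\infty$. $\mathbb{N}$ denotes the positive integers. For each positive integer $j$ let $\nu_j=\min\{N : q_m\ge 2j^2 \text{ for all } m\ge N\}$. Define $l_1=\max(\nu_2-1,1)$ and, recursively for $i\ge 2$, $l_i=\max\big(\min\{k\in\mathbb{N} : l_1+2l_2+\cdots+(i-1)l_{i-1}+ik\ge \nu_{i+1}-1\},1\big)$. Put $L_i=\sum_{j=1}^i jl_j$ (with $L_0=0$). Let $S_Q=\{(a,b,c)\in\mathbb{N}^3 : b\le l_a,\ c\le a\}$ and $\phi_Q(a,b,c)=L_{a-1}+(b-1)a+c$; $\phi_Q$ is a bijection $S_Q\to\mathbb{N}$. A $Q$-special sequence is a family of integers $F=(F_{(a,b,c)})_{(a,b,c)\in S_Q}$ with $F_{(a,b,1)}=0$ for all $(a,b,1)\in S_Q$ and $\frac{F_{(a,b,c)}}{q_{\phi_Q(a,b,c)}}\in\left[\frac{c-1}{a}-\frac{1}{2a^2},\frac{c-1}{a}+\frac{1}{2a^2}\right]$ for $(a,b,c)\in S_Q$ with $c>1$. For such $F$ put $E_{F,n}=F_{\phi_Q^{-1}(n)}$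 and let $y_F$ be the sequence $\left(E_{F,n}/q_n\right)_{n=1}^\infty$. For a sequence $w=(w_1,w_2,\dots)$ in $[0,1)$, the star discrepancy is $D_n^*(w)=\sup_{0<\gamma\le1}\left|\frac{\#\{1\le k\le n: w_k\in[0,\gamma)\}}{n}-\gamma\right|$. *)

From HB Require Import structures.
From Stdlib Require Import ClassicalEpsilon.
From mathcomp Require Import all_boot all_order all_algebra.
From mathcomp Require Import classical_sets reals.

Set Implicit Arguments.
Unset Strict Implicit.
Unset Printing Implicit Defensive.

Import Order.TTheory GRing.Theory Num.Theory.

(* MathComp + MathComp-Analysis (reals.v for [sup]).
   A sequence Q = (q_n)_{n>=1} is a function q : nat -> nat; q 0 is ignored. *)

Definition basic_seq (q : nat -> nat) : Prop := forall n, (1 <= n)%N -> (2 <= q n)%N.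

Definition infinite_in_limit (q : nat -> nat) : Prop :=
  forall B, exists N, forall n, (N <= n)%N -> (B <= q n)%N.

Definition is_nu (q : nat -> nat) (j N : nat) : Prop :=
  [/\ (1 <= N)%N,
      (forall m, (N <= m)%N -> (2 * j ^ 2 <= q m)%N) &
      (forall N', (1 <= N')%N -> (forall m, (N' <= m)%N -> (2 * j ^ 2 <= q m)%N) ->
                  (N <= N')%N)].

Definition nu (q : nat -> nat) (j : nat) : nat :=
  epsilon (inhabits 0%N) (fun N => is_nu q j N).

Lemma least_k_ex (p L T : nat) :
  exists k, (0 < k)%N && (T <= L + p.+1 * k)%N.
Proof.
exists T.+1; apply/andP; split=> //.
apply: (leq_trans (leqnSn T)); apply: (leq_trans _ (leq_addl _ _)).
by rewrite mulSn leq_addr.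
Qed.

Definition least_k (p L T : nat) : nat := ex_minn (least_k_ex p L T).

(* l_i as a function of L = L_{i-1} = l_1 + 2 l_2 + ... + (i-1) l_{i-1} *)
Definition l_aux (q : nat -> nat) (i L : nat) : nat :=
  if i == 1%N then maxn (nu q 2 - 1) 1
  else maxn (least_k i.-1 L (nu q i.+1 - 1)) 1.

Fixpoint Lsum (q : nat -> nat) (i : nat) : nat :=
  match i with
  | 0 => 0
  | j.+1 => Lsum q j + j.+1 * l_aux q j.+1 (Lsum q j)
  end.

Definition l (q : nat -> nat) (i : nat) : nat := l_aux q i (Lsum q i.-1).

Definition inS (q : nat -> nat) (a b c : nat) : Prop :=
  [/\ (1 <= a)%N, (1 <= b)%N, (b <= l q a)%N, (1 <= c)%N & (c <= a)%N].

Definition phi (q : nat -> nat) (a b c : nat) : nat :=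
  (Lsum q a.-1 + (b - 1) * a + c)%N.

Definition phi_inv (q : nat -> nat) (n : nat) : nat * nat * nat :=
  epsilon (inhabits (0, 0, 0)%N)
    (fun s => inS q s.1.1 s.1.2 s.2 /\ phi q s.1.1 s.1.2 s.2 = n).

Local Open Scope ring_scope.

Definition Q_special (R : realType) (q : nat -> nat) (F : nat -> nat -> nat -> int) : Prop :=
  forall a b c, inS q a b c ->
    (c = 1%N -> F a b c = 0) /\
    ((1 < c)%N ->
       let x : R := (F a b c)%:~R / (q (phi q a b c))%:R in
       ((c%:R - 1) / a%:R - 1 / (2 * a%:R ^+ 2) <= x) /\
       (x <= (c%:R - 1) / a%:R + 1 / (2 * a%:R ^+ 2))).

Definition E_F (q : nat -> nat) (F : nat -> nat -> nat -> int) (n : nat) : int :=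
  let s := phi_inv q n in F s.1.1 s.1.2 s.2.

Definition y_F (R : realType) (q : nat -> nat) (F : nat -> nat -> nat -> int) (n : nat) : R :=
  (E_F q F n)%:~R / (q n)%:R.

Definition star_discrepancy (R : realType) (w : nat -> R) (n : nat) : R :=
  sup [set `| (count (fun k => (0 <= w k) && (w k < g)) (iota 1 n))%:R / n%:R - g |
        | g in [set g : R | 0 < g <= 1]]%classic.

From HB Require Import structures.
From Stdlib Require Import ClassicalEpsilon.
From mathcomp Require Import all_boot all_order all_algebra.
From mathcomp Require Import classical_sets reals.
From mathcomp Require Import zify ring lra.
Import Order.TTheory GRing.Theory Num.Theory.

Set Implicit Arguments.
Unset Strict Implicit.
Unset Printing Implicit Defensive.

(* Index n of y_F lies in a block of indices (a, b, 1), ..., (a, b, a): a "run"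
   of length a, and these runs exhaust the positive integers in order.  On a run
   the points y_(a,b,c) are, up to 1/(2a^2), the grid points (c-1)/a, so the
   counting error of [0, g) changes by at most 2 over a whole run, and by at most
   r over a partial run of length r.  If n falls in level a, the error is thus
   at most 2 (l_1 + ... + l_a) + a <= 2 (K + M a) + a, while
   n > L_(a-1) >= (a-1)a/2 makes a of order sqrt(2n); dividing by n gives
   the rate sqrt(2M)(2M+1)/sqrt n up to the factor psi, which absorbs K and
   the lower order terms once n is large. *)

Section IndexMap.
Variable q : nat -> nat.

Lemma l_gt0 i : (0 < l q i)%N.
Proof. by rewrite /l /l_aux; case: ifP => _; exact: leq_maxr. Qed.

Lemma LsumS i : Lsum q i.+1 = (Lsum q i + i.+1 * l q i.+1)%N.
Proof. by []. Qed.

Lemma ltn_LsumS i : (Lsum q i < Lsum q i.+1)%N.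
Proof. rewrite LsumS; have := l_gt0 i.+1; nia. Qed.

Lemma leq_Lsum : {homo Lsum q : i j / (i <= j)%N}.
Proof. exact: homo_leq leqnn leq_trans (fun i => ltnW (ltn_LsumS i)). Qed.

Lemma leq_id_Lsum i : (i <= Lsum q i)%N.
Proof. by elim: i => [//|i IH]; exact: leq_ltn_trans IH (ltn_LsumS i). Qed.

Lemma Lsum_triangular i : (i * i.+1 <= 2 * Lsum q i)%N.
Proof. by elim: i => [//|i IH]; rewrite LsumS; have := l_gt0 i.+1; nia. Qed.

Lemma sqr_level_lt a n : (Lsum q a.-1 < n)%N -> (a.-1 ^ 2 < 2 * n)%N.
Proof. by have := Lsum_triangular a.-1; case: a => [|a] /=; nia. Qed.

Lemma phi_level a b c : inS q a b c ->
  (Lsum q a.-1 < phi q a b c <= Lsum q a)%N.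
Proof.
case: a => [[]//|a] [_ hb hbl hc hca]; rewrite /phi LsumS succnK.
have : ((b - 1) * a.+1 + a.+1 <= l q a.+1 * a.+1)%N.
  by rewrite -mulSnr; apply: leq_mul => //; lia.
rewrite [_ * l q _]mulnC => ?; apply/andP; split; nia.
Qed.

Lemma phi_inj a b c a' b' c' : inS q a b c -> inS q a' b' c' ->
  phi q a b c = phi q a' b' c' -> (a, b, c) = (a', b', c').
Proof.
move=> h h' e.
have /andP[lo hi] := phi_level h; have /andP[lo' hi'] := phi_level h'.
have ea : a = a'.
  have [ha _ _ _ _] := h; have [ha' _ _ _ _] := h'.
  case: (ltngtP a a') => // hlt.
  - have := @leq_Lsum a a'.-1 ltac:(lia); lia.
  - have := @leq_Lsum a' a.-1 ltac:(lia); lia.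
subst a'; case: h h' e => ha hb _ hc hca [_ hb' _ hc' hca']; rewrite /phi => e.
(* (b - 1, c - 1) are the quotient and remainder of phi - L_(a-1) - 1 by a *)
have e2 : ((b - 1) * a + (c - 1) = (b' - 1) * a + (c' - 1))%N by lia.
have := congr1 (divn^~ a) e2; have := congr1 (modn^~ a) e2.
rewrite /= !modnMDl !divnMDl ?modn_small ?divn_small; try lia.
by move=> ec eb; congr (_, _, _); lia.
Qed.

Lemma phiK a b c : inS q a b c -> phi_inv q (phi q a b c) = (a, b, c).
Proof.
move=> h; rewrite /phi_inv.
have := @epsilon_spec _ (inhabits (0, 0, 0)%N)
  (fun s => inS q s.1.1 s.1.2 s.2 /\ phi q s.1.1 s.1.2 s.2 = phi q a b c).
case: (epsilon _ _) => [[x y] z] /= [|h1 h2]; first by exists (a, b, c).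
exact: phi_inj h1 h h2.
Qed.

Lemma exists_level n : (0 < n)%N ->
  exists2 a, (0 < a)%N & (Lsum q a.-1 < n <= Lsum q a)%N.
Proof.
move=> n_gt0; have : (n <= Lsum q n)%N := leq_id_Lsum n.
elim: {2}n => [|A IH] hA; first by move: hA => /=; lia.
case: (leqP n (Lsum q A)) => h; first exact: IH.
by exists A.+1 => //; apply/andP.
Qed.

Definition nruns (a : nat) : nat := \sum_(1 <= j < a.+1) l q j.

Lemma nrunsS a : nruns a.+1 = (nruns a + l q a.+1)%N.
Proof. by rewrite /nruns big_nat_recr. Qed.

Lemma leq_nruns : {homo nruns : i j / (i <= j)%N}.
Proof.
by apply: homo_leq leqnn leq_trans _ => i; rewrite nrunsS leq_addr.
Qed.

End IndexMap.

Section RealFacts.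
Variable R : realType.
Local Open Scope ring_scope.

Lemma count_iota_ge (P : pred nat) (x : R) a :
  (forall k, (k < a)%N -> k%:R < x -> P k) -> x <= a%:R ->
  x <= (count P (iota 0 a))%:R.
Proof.
move=> H hx.
suff : (x <= (count P (iota 0 a))%:R) \/ count P (iota 0 a) = a by case=> // ->.
elim: a H {hx} => [|a IH] H; first by right.
rewrite -addn1 iotaD count_cat /= add0n addn0.
case: IH => [k hk|h|h]; first by apply: H; lia.
  by left; apply: le_trans h _; rewrite ler_nat leq_addr.
case: (lerP x a%:R) => hxa.
  by left; rewrite h; apply: le_trans hxa _; rewrite ler_nat leq_addr.
by right; rewrite h (H a (ltnSn a) hxa) addn1.
Qed.

Lemma count_iota_le (P : pred nat) (x : R) a :
  (forall k, (k < a)%N -> P k -> k%:R < x) -> 0 <= x ->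
  (count P (iota 0 a))%:R <= x + 1.
Proof.
elim: a => [|a IH] H x_ge0; first by rewrite /=; lra.
rewrite -addn1 iotaD count_cat /= add0n addn0.
case Pa : (P a); last by rewrite addn0; apply: IH => // k hk; apply: H; lia.
have : (count P (iota 0 a) <= a)%N.
  by apply: leq_trans (count_size _ _) _; rewrite size_iota.
rewrite addn1 -natr1 -(ler_nat R) => c_le; have := H a (ltnSn a) Pa; lra.
Qed.

Lemma scaled_grid_bounds (A K z : R) : 1 <= A -> 1 <= K ->
  K / A - 1 / (2 * A ^+ 2) <= z -> z <= K / A + 1 / (2 * A ^+ 2) ->
  0 <= z /\ K - 1/2 <= A * z <= K + 1/2.
Proof.
move=> A_ge1 K_ge1 lo hi.
have A_gt0 : 0 < A by lra.
set u : R := (2 * A)^-1.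
have u_ge0 : 0 <= u by rewrite invr_ge0; lra.
have u_le : u <= 1/2.
  have uA : u * (2 * A) = 1 by rewrite /u mulVf // gt_eqF //; lra.
  nra.
have e1 : A * (K / A - 1 / (2 * A ^+ 2)) = K - u by rewrite /u; field; lra.
have e2 : A * (K / A + 1 / (2 * A ^+ 2)) = K + u by rewrite /u; field; lra.
have := ler_wpM2l (ltW A_gt0) lo; have := ler_wpM2l (ltW A_gt0) hi.
rewrite e1 e2 => hi' lo'; split; last by apply/andP; lra.
nra.
Qed.

End RealFacts.

Section CountingError.
Variables (R : realType) (w : nat -> R).
Local Open Scope ring_scope.

Definition below (g : R) : pred nat := fun k => (0 <= w k) && (w k < g).

Definition count_err (n : nat) (g : R) : R :=
  (count (below g) (iota 1 n))%:R - n%:R * g.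

Lemma count_errD m r g : count_err (m + r) g - count_err m g =
  (count (below g) (iota m.+1 r))%:R - r%:R * g.
Proof. rewrite /count_err iotaD count_cat add1n !natrD; ring. Qed.

Lemma count_err_step m r g : 0 < g <= 1 ->
  `|count_err (m + r) g - count_err m g| <= r%:R.
Proof.
move=> /andP[g_gt0 g_le1]; rewrite count_errD.
set c := count _ _; have : (c <= r)%N.
  by apply: leq_trans (count_size _ _) _; rewrite size_iota.
rewrite -(ler_nat R) => c_le_r.
have c_ge0 : 0 <= c%:R :> R := ler0n _ _.
have r_ge0 : 0 <= r%:R :> R := ler0n _ _.
rewrite ler_norml; apply/andP; split; nra.
Qed.

Lemma star_discrepancy_le n (B : R) : (0 < n)%N ->
  (forall g, 0 < g <= 1 -> `|count_err n g| <= B) ->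
  star_discrepancy w n <= B / n%:R.
Proof.
move=> n_gt0 hB; apply: ge_sup; first by eexists; exists 1; rewrite /= ?ltr01 ?lexx.
move=> _ [g hg <-]; have n_neq0 : n%:R != 0 :> R by rewrite pnatr_eq0 -lt0n.
have -> : (count (below g) (iota 1 n))%:R / n%:R - g = count_err n g / n%:R.
  by rewrite /count_err; field.
by rewrite normf_div normr_nat ler_wpM2r ?invr_ge0 ?ler0n //; exact: hB.
Qed.

End CountingError.

Section SpecialSequence.
Variables (R : realType) (q : nat -> nat) (F : nat -> nat -> nat -> int).
Hypothesis hF : Q_special R q F.
Local Open Scope ring_scope.

Notation y := (y_F R q F).

Lemma y_F_run_bounds a b k : (0 < a)%N -> (0 < b <= l q a)%N -> (k < a)%N ->
  let z := y (Lsum q a.-1 + (b - 1) * a + k).+1 in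
  0 <= z /\ k%:R - 1/2 <= a%:R * z <= k%:R + 1/2.
Proof.
move=> a_gt0 /andP[b_gt0 b_le] k_lt z.
have hS : inS q a b k.+1 by [].
have -> : z = (F a b k.+1)%:~R / (q (phi q a b k.+1))%:R.
  by rewrite /z /y_F /E_F -addnS phiK.
have [F0 Fgrid] := hF hS.
case: (posnP k) => [k0|k_gt0].
  by rewrite F0 ?k0 // mulr0z mul0r mulr0; split; [|apply/andP]; lra.
have [lo hi] := Fgrid (ltac:(lia) : (1 < k.+1)%N).
by rewrite -natr1 addrK in lo hi; apply: scaled_grid_bounds; rewrite ?ler1n.
Qed.

Lemma count_err_run a b m (g : R) : (0 < a)%N -> (0 < b <= l q a)%N ->
  m = (Lsum q a.-1 + (b - 1) * a)%N -> 0 < g <= 1 ->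
  `|count_err y (m + a) g - count_err y m g| <= 2.
Proof.
move=> a_gt0 hb -> /andP[g_gt0 g_le1].
rewrite count_errD -[_.+1]addn0 iotaDl count_map.
set c := count _ _; have a_ge1 : 1 <= a%:R :> R by rewrite ler1n.
have lo : a%:R * g - 1/2 <= c%:R.
  apply: count_iota_ge; last by nra.
  move=> k k_lt k_small; rewrite /preim /below /= addSn.
  have [z_ge0 /andP[_ z_hi]] := y_F_run_bounds a_gt0 hb k_lt.
  by apply/andP; split => //; nra.
have hi : c%:R <= a%:R * g + 1/2 + 1.
  apply: count_iota_le; last by nra.
  move=> k k_lt; rewrite /preim /below /= addSn => /andP[_ z_lt].
  have [_ /andP[z_lo _]] := y_F_run_bounds a_gt0 hb k_lt.
  nra.
by rewrite ler_norml; apply/andP; split; lra.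
Qed.

Lemma count_err_runs a b g : 0 < g <= 1 -> (b <= l q a.+1)%N ->
  `|count_err y (Lsum q a + b * a.+1) g - count_err y (Lsum q a) g| <= 2 * b%:R.
Proof.
move=> hg; elim: b => [|b IH] hb; first by rewrite mul0n addn0 subrr normr0 mulr0.
have run := @count_err_run a.+1 b.+1 (Lsum q a + b * a.+1) g (ltn0Sn a) hb
  (ltac:(by rewrite succnK subn1)) hg.
have := IH (ltnW hb); rewrite mulSnr addnA -natr1.
have := ler_normD (count_err y (Lsum q a + b * a.+1 + a.+1) g -
  count_err y (Lsum q a + b * a.+1) g)
  (count_err y (Lsum q a + b * a.+1) g - count_err y (Lsum q a) g).
by rewrite addrA subrK; lra.
Qed.

Lemma count_err_Lsum a g : 0 < g <= 1 ->
  `|count_err y (Lsum q a) g| <= 2 * (nruns q a)%:R.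
Proof.
move=> hg; elim: a => [|a IH].
  by rewrite /count_err /= mul0r subr0 normr0 mulr_ge0 ?ler0n.
have := count_err_runs hg (leqnn (l q a.+1)); have := lerB_dist
  (count_err y (Lsum q a.+1) g) (count_err y (Lsum q a) g).
by rewrite LsumS mulnC nrunsS natrD; lra.
Qed.

Lemma count_err_level n : (0 < n)%N -> exists a, [/\ (0 < a)%N, (Lsum q a.-1 < n)%N &
  forall g, 0 < g <= 1 -> `|count_err y n g| <= 2 * (nruns q a)%:R + a%:R].
Proof.
case/(exists_level q) => -[//|a] _ /andP[lo hi]; exists a.+1; split => // g hg.
rewrite succnK in lo; set d := (n - Lsum q a)%N.
have hb : (d %/ a.+1 <= l q a.+1)%N.
  by rewrite -ltnS ltn_divLR //; move: hi; rewrite LsumS /d; lia.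
have en : n = (Lsum q a + d %/ a.+1 * a.+1 + d %% a.+1)%N.
  by have := divn_eq d a.+1; rewrite /d; lia.
set m := (Lsum q a + d %/ a.+1 * a.+1)%N.
have partial := count_err_step y m (d %% a.+1) hg; rewrite -en in partial.
have full := count_err_runs hg hb; have start := count_err_Lsum a hg.
have r_le : (d %% a.+1)%:R <= a.+1%:R :> R by rewrite ler_nat ltnW ?ltn_mod.
have b_le : (d %/ a.+1)%:R <= (l q a.+1)%:R :> R by rewrite ler_nat.
have := lerB_dist (count_err y n g) (count_err y m g).
have := lerB_dist (count_err y m g) (count_err y (Lsum q a) g).
by rewrite nrunsS natrD; lra.
Qed.

End SpecialSequence.

Section Rate.
Variable R : realType.
Local Open Scope ring_scope.

Lemma nruns_bound q (M : R) t : (forall j, (t < j)%N -> (l q j)%:R <= M) ->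
  forall a, (nruns q a)%:R <= (nruns q t)%:R + M * a%:R.
Proof.
move=> hM; have M_ge0 : 0 <= M by apply: le_trans (hM t.+1 (ltnSn t)).
elim=> [|a IH]; first by rewrite mulr0 addr0 ler_nat leq_nruns.
have a_ge0 : 0 <= M * a%:R by rewrite mulr_ge0.
case: (leqP a.+1 t) => [a_le|t_lt].
  by have := leq_nruns q a_le; rewrite -(ler_nat R); lra.
by have := hM _ t_lt; rewrite nrunsS natrD -natr1; lra.
Qed.

Lemma discrepancy_rate (K M psi A n : R) : 0 <= K -> 1 <= M -> 1 < psi -> 1 <= A ->
  (A - 1) ^+ 2 < 2 * n -> ((2 * K + 2 * M + 1) / (psi - 1)) ^+ 2 < n ->
  (2 * (K + M * A) + A) / n < psi * Num.sqrt (2 * M) * (2 * M + 1) * (Num.sqrt n)^-1.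
Proof.
move=> K_ge0 M_ge1 psi_gt1 A_ge1 hA; set C := _ / _ => hC.
have C_ge0 : 0 <= C by apply: divr_ge0; lra.
have n_gt0 : 0 < n by apply: le_lt_trans hC; exact: sqr_ge0.
set s := Num.sqrt n; have s2 : s ^+ 2 = n by rewrite sqr_sqrtr ?ltW.
have s_gt0 : 0 < s by rewrite sqrtr_gt0.
set u := Num.sqrt (2 * M); have u2 : u ^+ 2 = 2 * M by rewrite sqr_sqrtr //; lra.
have u_ge1 : 1 <= u by rewrite -sqrtr1 ler_sqrt; lra.
have C_lt : C < s.
  by rewrite -(ltr_pXn2r (_ : (0 < 2)%N)) ?s2 ?nnegrE // ltW.
have A_lt : A - 1 < u * s.
  by rewrite -(ltr_pXn2r (_ : (0 < 2)%N)) ?exprMn ?u2 ?s2 ?nnegrE //; nra.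
(* (psi - 1) s absorbs 2K + 2M + 1, and u s (2M + 1) absorbs (2M + 1)(A - 1) *)
have h1 : 2 * K + 2 * M + 1 < s * (psi - 1).
  by move: C_lt; rewrite /C ltr_pdivrMr // subr_gt0.
have h2 : (psi - 1) * s <= (psi - 1) * s * (u * (2 * M + 1)).
  by apply: ler_peMr; nra.
have h3 : (2 * M + 1) * (A - 1) <= (2 * M + 1) * (u * s) by nra.
rewrite -s2 expr2 invfM mulrA ltr_pM2r ?invr_gt0 // ltr_pdivrMr //; nra.
Qed.

End Rate.

Local Open Scope ring_scope.

Theorem mainTheorem11 (R : realType) (q : nat -> nat)
  (hbasic : basic_seq q) (hinf : infinite_in_limit q)
  (M : R) (t : nat) (hM : forall j : nat, (t < j)%N -> (l q j)%:R <= M)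
  (F : nat -> nat -> nat -> int) (hF : Q_special R q F)
  (psi : R) (hpsi : 1 < psi) :
  exists N : nat, forall n : nat, (N <= n)%N ->
    star_discrepancy (y_F R q F) n
      < psi * Num.sqrt (2 * M) * (2 * M + 1) * (Num.sqrt n%:R)^-1.
Proof.
have M_ge1 : 1 <= M by apply: le_trans (hM t.+1 (ltnSn t)); rewrite ler1n l_gt0.
set K : R := (nruns q t)%:R; set C : R := (2 * K + 2 * M + 1) / (psi - 1).
have K_ge0 : 0 <= K := ler0n _ _.
have C_ge0 : 0 <= C by apply: divr_ge0; lra.
exists (maxn 1 (Num.Def.archi_bound (C ^+ 2))) => n.
rewrite geq_max => /andP[n_gt0 n_large].
have [a [a_gt0 a_lt err_le]] := count_err_level hF n_gt0.
apply: le_lt_trans (star_discrepancy_le (B := 2 * (K + M * a%:R) + a%:R) n_gt0 _) _.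
  by move=> g hg; have := err_le g hg; have := nruns_bound hM a; lra.
apply: discrepancy_rate; rewrite ?ler1n //.
  rewrite -[in a%:R](prednK a_gt0) -natr1 addrK -natrX -natrM ltr_nat.
  exact: sqr_level_lt a_lt.
apply: lt_le_trans (archi_boundP (exprn_ge0 2 C_ge0)) _.
by rewrite ler_nat.
Qed.
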